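(* If $u=v_1\,0\,v_2\,0\cdots0\,v_r$, where $v_1,\dots,v_r$ are arbitrary (possibly empty) words over $\{1,0,\bar1\}$, then \[ [u]=[v_10]\,[0v_20]\cdots[0v_{r-1}0]\,[0v_r]. \]
   Context: Words are finite sequences over the alphabet $\{1,0,\bar1\}$ (where $\bar1=-1$). Let $a,b,c,d,e$ be indeterminates. For every word $u$ a Laurent polynomial $[u]$ in $a,b,c,d,e$ is defined by the recursions, valid for all (possibly empty) words $v,w$: $[v01w]=[v0w]/a$, $[v\bar11w]=([v\bar1w]+[v1w])/b$, $[v\bar10w]=[v0w]/c$, $[v\bar1]=[v]/d$, $[1v]=[v]/e$, together with $[u]=1$ whenever $u$ consists only of $0$'s (including the empty word). These rules determine $[u]$ uniquely for every word. *)

From mathcomp Require Import all_boot all_order all_algebra.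
Set Implicit Arguments. Unset Strict Implicit. Unset Printing Implicit Defensive.
Import GRing.Theory.
Local Open Scope ring_scope.

(* Letters of the alphabet {1, 0, -1}; Lm stands for \bar 1 = -1. *)
Inductive letter := L1 | L0 | Lm.

Definition is_bracket (F : fieldType) (a b c d e : F)
    (br : seq letter -> F) : Prop :=
  (forall v w : seq letter,
     br (v ++ L0 :: L1 :: w) = br (v ++ L0 :: w) / a) /\
  (forall v w : seq letter,
     br (v ++ Lm :: L1 :: w) = (br (v ++ Lm :: w) + br (v ++ L1 :: w)) / b) /\
  (forall v w : seq letter,
     br (v ++ Lm :: L0 :: w) = br (v ++ L0 :: w) / c) /\
  (forall v : seq letter, br (v ++ [:: Lm]) = br v / d) /\
  (forall v : seq letter, br (L1 :: v) = br v / e) /\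
  (forall n : nat, br (nseq n L0) = 1).

(* Each rule that
   applies to [0 w] (the rule for 01 at the separating 0, the others inside w
   or at its last letter) applies verbatim to [v 0 w] with the same factor, so
   [v 0 w] = [v 0] [0 w] reduces to the case where w is a block of 0s.  There
   [v 0 0^n] = [v 0] follows by reducing v instead: trailing zeros are never
   consumed by a rule.  Iterating over the separating zeros gives the
   product formula. *)

From mathcomp Require Import all_boot all_order all_algebra.
From mathcomp Require Import zify.
Set Implicit Arguments. Unset Strict Implicit. Unset Printing Implicit Defensive.
Import GRing.Theory.
Local Open Scope ring_scope.

Lemma word_cases (w : seq letter) :
  (exists n, w = nseq n L0) \/ (exists y, w = L1 :: y) \/
  (exists y, w = y ++ [:: Lm]) \/
  (exists p q, w = p ++ L0 :: L1 :: q) \/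
  (exists p q, w = p ++ Lm :: L1 :: q) \/
  (exists p q, w = p ++ Lm :: L0 :: q).
Proof.
elim: w => [|h t IH]; first by left; exists 0%N.
case: IH => [[n ->]|[[y ->]|[[y ->]|[[p [q ->]]|[[p [q ->]]|[p [q ->]]]]]]].
- case: h.
  + by right; left; exists (nseq n L0).
  + by left; exists n.+1.
  + case: n => [|n].
    * by right; right; left; exists [::].
    * by do 5 right; exists [::], (nseq n L0).
- case: h.
  + by right; left; exists (L1 :: y).
  + by do 3 right; left; exists [::], y.
  + by do 4 right; left; exists [::], y.
- by right; right; left; exists (h :: y).
- by do 3 right; left; exists (h :: p), q.
- by do 4 right; left; exists (h :: p), q.
- by do 5 right; exists (h :: p), q.
Qed.

(* Induction along the defining recursions of the bracket: each rule rewrites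
   a word into strictly shorter ones. *)
Lemma word_reduction_ind (P : seq letter -> Prop) :
  (forall n, P (nseq n L0)) ->
  (forall y, P y -> P (L1 :: y)) ->
  (forall y, P y -> P (y ++ [:: Lm])) ->
  (forall p q, P (p ++ L0 :: q) -> P (p ++ L0 :: L1 :: q)) ->
  (forall p q, P (p ++ Lm :: q) -> P (p ++ L1 :: q) -> P (p ++ Lm :: L1 :: q)) ->
  (forall p q, P (p ++ L0 :: q) -> P (p ++ Lm :: L0 :: q)) ->
  forall w, P w.
Proof.
move=> Pz P1 Pend P01 Pm1 Pm0 w.
elim: {w}(size w) {-2}w (leqnn (size w)) => [|k IH] w.
  by case: w => // _; apply: (Pz 0%N).
case: (word_cases w) => [[n ->]|[[y ->]|[[y ->]|[[p [q ->]]|[[p [q ->]]|[p [q ->]]]]]]];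
  rewrite ?size_cat /= => hw.
- exact: Pz.
- by apply/P1/IH; lia.
- by apply/Pend/IH; lia.
- by apply/P01/IH; rewrite size_cat /=; lia.
- by apply: Pm1; apply: IH; rewrite size_cat /=; lia.
- by apply/Pm0/IH; rewrite size_cat /=; lia.
Qed.

Section Bracket.
Variables (F : fieldType) (a b c d e : F) (br : seq letter -> F).
Hypothesis hbr : is_bracket a b c d e br.

Lemma bracket_01 v w : br (v ++ L0 :: L1 :: w) = br (v ++ L0 :: w) / a.
Proof. by case: hbr. Qed.

Lemma bracket_m1 v w :
  br (v ++ Lm :: L1 :: w) = (br (v ++ Lm :: w) + br (v ++ L1 :: w)) / b.
Proof. by case: hbr => _ []. Qed.

Lemma bracket_m0 v w : br (v ++ Lm :: L0 :: w) = br (v ++ L0 :: w) / c.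
Proof. by case: hbr => _ [_ []]. Qed.

Lemma bracket_m_last v : br (v ++ [:: Lm]) = br v / d.
Proof. by case: hbr => _ [_ [_ []]]. Qed.

Lemma bracket_1_head v : br (L1 :: v) = br v / e.
Proof. by case: hbr => _ [_ [_ [_ []]]]. Qed.

Lemma bracket_nseq0 n : br (nseq n L0) = 1.
Proof. by case: hbr => _ [_ [_ [_ []]]]. Qed.

Lemma bracket_cat_nseq0 v n : br (v ++ L0 :: nseq n L0) = br (v ++ [:: L0]).
Proof.
elim/word_reduction_ind: v => [m|y IH|y IH|p q IH|p q IH1 IH2|p q IH].
- by rewrite -[L0 :: nseq n L0]/(nseq n.+1 L0) -[[:: L0]]/(nseq 1 L0) -!nseqD
     !bracket_nseq0.
- by rewrite /= !bracket_1_head IH.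
- by rewrite -!catA /= !bracket_m0 IH.
- by rewrite -!catA /= in IH *; rewrite !bracket_01 IH.
- by rewrite -!catA /= in IH1 IH2 *; rewrite !bracket_m1 IH1 IH2.
- by rewrite -!catA /= in IH *; rewrite !bracket_m0 IH.
Qed.

Lemma bracket_cat0 v w : br (v ++ L0 :: w) = br (v ++ [:: L0]) * br (L0 :: w).
Proof.
elim/word_reduction_ind: w => [n|y IH|y IH|p q IH|p q IH1 IH2|p q IH].
- by rewrite bracket_cat_nseq0 -[L0 :: nseq n L0]/(nseq n.+1 L0) bracket_nseq0 mulr1.
- by rewrite (bracket_01 v y) (bracket_01 [::] y) IH mulrA.
- by rewrite -cat_cons !catA !bracket_m_last IH mulrA.
- by rewrite -cat_cons catA !bracket_01 -catA /= IH mulrA.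
- by rewrite -cat_cons catA !bracket_m1 -!catA /= IH1 IH2 -mulrDr mulrA.
- by rewrite -cat_cons catA !bracket_m0 -catA /= IH mulrA.
Qed.

End Bracket.

Theorem proposition4 (F : fieldType) (a b c d e : F)
    (ha : a != 0) (hb : b != 0) (hc : c != 0) (hd : d != 0) (he : e != 0)
    (br : seq letter -> F) (hbr : is_bracket a b c d e br)
    (v1 vr : seq letter) (mids : seq (seq letter)) :
  br (v1 ++ L0 :: flatten [seq v ++ [:: L0] | v <- mids] ++ vr) =
  br (v1 ++ [:: L0]) * (\prod_(v <- mids) br (L0 :: v ++ [:: L0])) * br (L0 :: vr).
Proof.
elim: mids v1 => [|v mids IH] v1.
  by rewrite big_nil mulr1 (bracket_cat0 hbr).
by rewrite big_cons /= (bracket_cat0 hbr) -!catA (IH (L0 :: v)) !mulrA.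
Qed.
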